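(* Let $s_0\ge1$ be an integer and let $f=(f_1,f_2)$ and $g=(g_1,g_2)$ be smooth vector fields on $\mathbb{T}^2$. Then \begin{align*} \Big|\int_{\mathbb{T}^2}\partial^{s_0}(f\cdot\nabla g)\cdot\partial^{s_0}g\,dx\Big| \lesssim\;&\Big(\|\nabla f_1\|_{H^{[\frac{s_0}{2}]+1}}\|\partial_1g\|_{H^{s_0-1}}+\|\nabla f_2\|_{H^{[\frac{s_0}{2}]+1}}\|\partial_2g\|_{H^{s_0-1}}\Big)\|g\|_{\dot H^{s_0}}\\ &+\Big(\|\nabla f_1\|_{H^{s_0-1}}\|\partial_1g\|_{H^{[\frac{s_0}{2}]+2}}+\|\nabla f_2\|_{H^{s_0-1}}\|\partial_2g\|_{H^{[\frac{s_0}{2}]+2}}\Big)\|g\|_{\dot H^{s_0}}\\ &+\|\nabla\cdot f\|_{H^2}\|g\|_{\dot H^{s_0}}^2. \end{align*}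
   Context: $\mathbb{T}^2=[-\pi,\pi]^2$ is the periodic domain. $\partial^{s_0}$ denotes any partial derivative $\partial_1^{\alpha_1}\partial_2^{\alpha_2}$ with $\alpha_1+\alpha_2=s_0$, applied componentwise; $f\cdot\nabla g=f_1\partial_1g+f_2\partial_2g$. $[\cdot]$ is the integer part and $\dot H^{s_0}$ the homogeneous Sobolev seminorm. $A\lesssim B$ means $A\le CB$ with a constant $C$ depending only on $s_0$. *)

From Stdlib Require Import Reals.
From Coquelicot Require Import Coquelicot.
Open Scope R_scope.

Definition fn2 := R -> R -> R.

Definition pd1 (u : fn2) : fn2 := fun x y => Derive (fun t => u t y) x.
Definition pd2 (u : fn2) : fn2 := fun x y => Derive (fun t => u x t) y.

Definition pdn (a b : nat) (u : fn2) : fn2 := Nat.iter a pd1 (Nat.iter b pd2 u).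

Definition smooth2 (u : fn2) : Prop :=
  forall (a b : nat) (x y : R),
    ex_derive (fun t => pdn a b u t y) x /\
    ex_derive (fun t => pdn a b u x t) y /\
    continuous (fun p : R * R => pdn a b u (fst p) (snd p)) (x, y).

(* 2pi-periodic in each variable: a function on T^2 = [-pi,pi]^2. *)
Definition periodic2 (u : fn2) : Prop :=
  forall x y, u (x + 2 * PI) y = u x y /\ u x (y + 2 * PI) = u x y.

Definition smooth_T2 (u : fn2) : Prop := smooth2 u /\ periodic2 u.

Definition intT2 (h : fn2) : R :=
  RInt (fun x => RInt (fun y => h x y) (- PI) PI) (- PI) PI.

Definition L2sq (u : fn2) : R := intT2 (fun x y => u x y ^ 2).

Definition Hsq (k : nat) (u : fn2) : R :=
  sum_f_R0 (fun a => sum_f_R0 (fun b => L2sq (pdn a b u)) (k - a)) k.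

Definition Hdotsq (k : nat) (u : fn2) : R :=
  sum_f_R0 (fun a => L2sq (pdn a (k - a) u)) k.

Definition Hnorm2 (k : nat) (u v : fn2) : R := sqrt (Hsq k u + Hsq k v).
Definition Hnorm1 (k : nat) (u : fn2) : R := sqrt (Hsq k u).
Definition Hdotnorm2 (k : nat) (u v : fn2) : R := sqrt (Hdotsq k u + Hdotsq k v).

Definition adv (f1 f2 h : fn2) : fn2 :=
  fun x y => f1 x y * pd1 h x y + f2 x y * pd2 h x y.

Definition trilin (a b : nat) (f1 f2 g1 g2 : fn2) : R :=
  intT2 (fun x y =>
    pdn a b (adv f1 f2 g1) x y * pdn a b g1 x y +
    pdn a b (adv f1 f2 g2) x y * pdn a b g2 x y).

Definition divf (f1 f2 : fn2) : fn2 := fun x y => pd1 f1 x y + pd2 f2 x y.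

From Stdlib Require Import Reals Lra Lia FunctionalExtensionality List.
From Coquelicot Require Import Coquelicot.
Import ListNotations.
Open Scope R_scope.

(* By the Leibniz rule, [pdn a b (f . grad g)] is [f . grad (pdn a b g)] plus products
   [pdn p q f_i * pdn r s (pd_i g)] with [1 <= p + q] and [p + q + r + s = s0].  Paired
   with [G = pdn a b g], the top-order term integrates to [-1/2 * intT2 ((div f) G^2)]
   because [f . grad (G^2)] integrates by parts on the torus; it is bounded by
   [|div f|_oo |G|_2^2].  In every other product one factor carries at most [s0/2]
   derivatives and is bounded in L^oo by the embedding H^2 in L^oo (from the
   one-dimensional bound [w x0^2 <= RInt (2 w^2 + w'^2)] in each variable), while the
   other factor and [G] are bounded in L^2. *)

Lemma fn2_ext (u v : fn2) : (forall x y, u x y = v x y) -> u = v.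
Proof.
  intros H. apply functional_extensionality; intro x.
  apply functional_extensionality; intro y. apply H.
Qed.

Definition plus2 (u v : fn2) : fn2 := fun x y => u x y + v x y.
Definition mul2 (u v : fn2) : fn2 := fun x y => u x y * v x y.
Definition scal2 (c : R) (u : fn2) : fn2 := fun x y => c * u x y.

Definition continuous2 (w : fn2) (x y : R) : Prop :=
  continuous (fun p : R * R => w (fst p) (snd p)) (x, y).

Lemma continuous2_x (w : fn2) x y : continuous2 w x y -> continuous (fun t => w t y) x.
Proof.
  intros H. apply (continuous_comp_2 (fun t => t) (fun _ : R => y) w); auto.
  - apply continuous_id.
  - apply continuous_const.
Qed.

Lemma continuous2_y (w : fn2) x y : continuous2 w x y -> continuous (fun t => w x t) y.
Proof.
  intros H. apply (continuous_comp_2 (fun _ : R => x) (fun t => t) w); auto.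
  - apply continuous_const.
  - apply continuous_id.
Qed.

Lemma Derive_periodic (f : R -> R) c x :
  (forall t, f (t + c) = f t) -> Derive f (x + c) = Derive f x.
Proof.
  intros H. unfold Derive. f_equal. apply Lim_ext. intro h.
  replace (x + c + h) with ((x + h) + c) by ring. rewrite !H. reflexivity.
Qed.

Lemma periodic2_pd1 u : periodic2 u -> periodic2 (pd1 u).
Proof.
  intros H x y. unfold pd1. split.
  - apply Derive_periodic. intro t. apply (H t y).
  - apply Derive_ext. intro t. apply (H t y).
Qed.

Lemma periodic2_pd2 u : periodic2 u -> periodic2 (pd2 u).
Proof.
  intros H x y. unfold pd2. split.
  - apply Derive_ext. intro t. apply (H x t).
  - apply Derive_periodic. intro t. apply (H x t).
Qed.

Lemma periodic2_pdn a b u : periodic2 u -> periodic2 (pdn a b u).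
Proof.
  intros H. unfold pdn. induction a as [|a IH]; simpl.
  - induction b as [|b IHb]; simpl; auto. apply periodic2_pd2; auto.
  - apply periodic2_pd1; auto.
Qed.

Lemma periodic2_mul u v : periodic2 u -> periodic2 v -> periodic2 (mul2 u v).
Proof.
  intros Hu Hv x y. unfold mul2.
  destruct (Hu x y) as [-> ->]. destruct (Hv x y) as [-> ->]. auto.
Qed.

Lemma smooth2_ex_derive_x u a b x y : smooth2 u -> ex_derive (fun t => pdn a b u t y) x.
Proof. intros H. apply (H a b x y). Qed.

Lemma smooth2_ex_derive_y u a b x y : smooth2 u -> ex_derive (fun t => pdn a b u x t) y.
Proof. intros H. apply (H a b x y). Qed.

Lemma smooth2_continuous u a b x y : smooth2 u -> continuous2 (pdn a b u) x y.
Proof. intros H. apply (H a b x y). Qed.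

Lemma ex_RInt_y (w : fn2) x a b :
  (forall x y, continuous2 w x y) -> ex_RInt (fun t => w x t) a b.
Proof.
  intros H. apply (@ex_RInt_continuous R_CompleteNormedModule).
  intros z _. apply continuous2_y, H.
Qed.

Lemma is_derive_RInt_y (w : fn2) a b x :
  (forall x y, ex_derive (fun t => w t y) x) ->
  (forall x y, continuous2 w x y) -> (forall x y, continuous2 (pd1 w) x y) ->
  is_derive (fun z => RInt (fun t => w z t) a b) x (RInt (fun t => pd1 w x t) a b).
Proof.
  intros Hd Hc Hc1.
  apply (is_derive_RInt_param (fun z t => w z t) a b x).
  - apply filter_forall. intros z t _. apply Hd.
  - intros t _. apply continuity_2d_pt_filterlim, Hc1.
  - apply filter_forall. intros z. apply ex_RInt_y, Hc.
Qed.

(* Clairaut: differentiating [v z t - v z 0 = RInt (pd2 v z) 0 t] in [z] under the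
   integral sign gives [pd1 v x t - pd1 v x 0 = RInt (pd1 (pd2 v) x) 0 t]. *)
Lemma pd2_pd1 (v : fn2) x y : smooth2 v -> pd2 (pd1 v) x y = pd1 (pd2 v) x y.
Proof.
  intros Hv.
  set (g := fun t => pd1 (pd2 v) x t).
  assert (Hg : forall b, is_RInt g 0 b (RInt g 0 b)).
  { intro b. apply (@RInt_correct R_CompleteNormedModule).
    apply (ex_RInt_y (pd1 (pd2 v))). intros; apply (smooth2_continuous v 1 1), Hv. }
  assert (Hftc : forall z t, RInt (fun s => pd2 v z s) 0 t = v z t - v z 0).
  { intros z t. apply (RInt_Derive (fun s => v z s)).
    - intros s _. apply (smooth2_ex_derive_y v 0 0 z s Hv).
    - intros s _. apply (continuous2_y (pdn 0 1 v)), smooth2_continuous, Hv. }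
  assert (Hslice : forall t, pd1 v x t = pd1 v x 0 + RInt g 0 t).
  { intro t. enough (pd1 v x t - pd1 v x 0 = RInt g 0 t) by lra.
    unfold pd1 at 1 2. rewrite <- Derive_minus by apply (smooth2_ex_derive_x v 0 0 x _ Hv).
    rewrite (Derive_ext _ (fun z => RInt (fun s => pd2 v z s) 0 t))
      by (intro; rewrite Hftc; reflexivity).
    apply is_derive_unique, (is_derive_RInt_y (pd2 v)).
    - intros; apply (smooth2_ex_derive_x v 0 1), Hv.
    - intros; apply (smooth2_continuous v 0 1), Hv.
    - intros; apply (smooth2_continuous v 1 1), Hv. }
  unfold pd2 at 1. rewrite (Derive_ext _ (fun t => pd1 v x 0 + RInt g 0 t) _ Hslice).
  apply is_derive_unique.
  replace (g y) with (0 + g y) by ring.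
  apply (is_derive_plus (fun _ => pd1 v x 0) (fun t => RInt g 0 t)).
  - apply (@is_derive_const R_AbsRing R_NormedModule).
  - apply (is_derive_RInt g (fun t => RInt g 0 t) 0 y).
    + apply filter_forall, Hg.
    + apply (continuous2_y (pdn 1 1 v)), smooth2_continuous, Hv.
Qed.

Lemma smooth2_iter_pd2 v b : smooth2 v -> smooth2 (Nat.iter b pd2 v).
Proof.
  intros Hv a c x y. unfold pdn. rewrite <- Nat.iter_add. apply (Hv a (c + b)%nat x y).
Qed.

Lemma iter_pd2_pd1 v b : smooth2 v -> Nat.iter b pd2 (pd1 v) = pd1 (Nat.iter b pd2 v).
Proof.
  intros Hv. induction b as [|b IH]; simpl; auto.
  rewrite IH. apply fn2_ext. intros x y. apply pd2_pd1, smooth2_iter_pd2, Hv.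
Qed.

Lemma smooth2_pd1 v : smooth2 v -> smooth2 (pd1 v).
Proof.
  intros Hv a b x y. unfold pdn. rewrite iter_pd2_pd1 by exact Hv.
  rewrite <- Nat.iter_succ_r. apply (Hv (S a) b x y).
Qed.

Lemma smooth2_pd2 v : smooth2 v -> smooth2 (pd2 v).
Proof. intros Hv a b x y. unfold pdn. rewrite <- Nat.iter_succ_r. apply (Hv a (S b) x y). Qed.

Lemma smooth2_pdn a b v : smooth2 v -> smooth2 (pdn a b v).
Proof.
  intros Hv. unfold pdn. induction a as [|a IH]; simpl.
  - apply smooth2_iter_pd2, Hv.
  - apply smooth2_pd1, IH.
Qed.

Lemma iter_pd2_iter_pd1 b a w : smooth2 w ->
  Nat.iter b pd2 (Nat.iter a pd1 w) = Nat.iter a pd1 (Nat.iter b pd2 w).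
Proof.
  intros Hw. induction a as [|a IH]; simpl; auto.
  rewrite iter_pd2_pd1 by apply (smooth2_pdn a 0 w Hw). rewrite IH. reflexivity.
Qed.

Lemma pdn_pdn c d a b v : smooth2 v -> pdn c d (pdn a b v) = pdn (c + a) (d + b) v.
Proof.
  intros Hv. unfold pdn at 1 2.
  rewrite iter_pd2_iter_pd1 by apply smooth2_iter_pd2, Hv.
  unfold pdn. rewrite !Nat.iter_add. reflexivity.
Qed.

Lemma pdn_pd1 a b v : smooth2 v -> pdn a b (pd1 v) = pdn (S a) b v.
Proof.
  intros Hv. change (pd1 v) with (pdn 1 0 v). rewrite pdn_pdn by exact Hv. f_equal; lia.
Qed.

Lemma pdn_pd2 a b v : smooth2 v -> pdn a b (pd2 v) = pdn a (S b) v.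
Proof.
  intros Hv. change (pd2 v) with (pdn 0 1 v). rewrite pdn_pdn by exact Hv. f_equal; lia.
Qed.

Lemma pd2_pdn a b v : smooth2 v -> pd2 (pdn a b v) = pdn a (S b) v.
Proof. intros Hv. change (pd2 (pdn a b v)) with (pdn 0 1 (pdn a b v)). apply pdn_pdn, Hv. Qed.

Lemma pdn_factor a b v : smooth2 v -> (1 <= a + b)%nat ->
  (exists a', pdn a b v = pdn a' b (pd1 v) /\ (a' + b)%nat = (a + b - 1)%nat) \/
  (exists b', pdn a b v = pdn a b' (pd2 v) /\ (a + b')%nat = (a + b - 1)%nat).
Proof.
  intros Hv Hab. destruct a as [|a'].
  - destruct b as [|b']; [lia|]. right. exists b'. rewrite pdn_pd2 by exact Hv. split; auto; lia.
  - left. exists a'. rewrite pdn_pd1 by exact Hv. split; auto; lia.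
Qed.

Definition regular2 (u : fn2) : Prop := forall x y,
  ex_derive (fun t => u t y) x /\ ex_derive (fun t => u x t) y /\ continuous2 u x y.

Lemma regular2_pdn u a b : smooth2 u -> regular2 (pdn a b u).
Proof. intros H x y. apply H. Qed.

Lemma regular2_smooth2 u : smooth2 u -> regular2 u.
Proof. apply (regular2_pdn u 0 0). Qed.

Lemma regular2_zero : regular2 (fun _ _ => 0).
Proof.
  intros x y. split; [|split]; try apply ex_derive_const. apply continuous_const.
Qed.

Lemma regular2_plus u v : regular2 u -> regular2 v -> regular2 (plus2 u v).
Proof.
  intros Hu Hv x y. destruct (Hu x y) as [H1 [H2 H3]]. destruct (Hv x y) as [K1 [K2 K3]].
  split; [|split].
  - apply (ex_derive_plus (fun t => u t y) (fun t => v t y)); auto.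
  - apply (ex_derive_plus (fun t => u x t) (fun t => v x t)); auto.
  - apply (continuous_plus (fun p : R * R => u (fst p) (snd p))
                           (fun p : R * R => v (fst p) (snd p))); auto.
Qed.

Lemma regular2_mul u v : regular2 u -> regular2 v -> regular2 (mul2 u v).
Proof.
  intros Hu Hv x y. destruct (Hu x y) as [H1 [H2 H3]]. destruct (Hv x y) as [K1 [K2 K3]].
  split; [|split].
  - apply (ex_derive_mult (fun t => u t y) (fun t => v t y)); auto.
  - apply (ex_derive_mult (fun t => u x t) (fun t => v x t)); auto.
  - apply (continuous_mult (fun p : R * R => u (fst p) (snd p))
                           (fun p : R * R => v (fst p) (snd p))); auto.
Qed.

Lemma regular2_scal c u : regular2 u -> regular2 (scal2 c u).
Proof.
  intros Hu x y. destruct (Hu x y) as [H1 [H2 H3]]. split; [|split].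
  - apply (ex_derive_scal (fun t => u t y)); auto.
  - apply (ex_derive_scal (fun t => u x t)); auto.
  - apply (continuous_mult (fun _ : R * R => c) (fun p : R * R => u (fst p) (snd p))); auto.
    apply continuous_const.
Qed.

Lemma pd1_plus u v : regular2 u -> regular2 v -> pd1 (plus2 u v) = plus2 (pd1 u) (pd1 v).
Proof.
  intros Hu Hv. apply fn2_ext; intros x y.
  apply (Derive_plus (fun t => u t y) (fun t => v t y)); [apply (Hu x y) | apply (Hv x y)].
Qed.

Lemma pd2_plus u v : regular2 u -> regular2 v -> pd2 (plus2 u v) = plus2 (pd2 u) (pd2 v).
Proof.
  intros Hu Hv. apply fn2_ext; intros x y.
  apply (Derive_plus (fun t => u x t) (fun t => v x t)); [apply (Hu x y) | apply (Hv x y)].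
Qed.

Lemma pd1_mul u v : regular2 u -> regular2 v ->
  pd1 (mul2 u v) = plus2 (mul2 (pd1 u) v) (mul2 u (pd1 v)).
Proof.
  intros Hu Hv. apply fn2_ext; intros x y.
  apply (Derive_mult (fun t => u t y) (fun t => v t y)); [apply (Hu x y) | apply (Hv x y)].
Qed.

Lemma pd2_mul u v : regular2 u -> regular2 v ->
  pd2 (mul2 u v) = plus2 (mul2 (pd2 u) v) (mul2 u (pd2 v)).
Proof.
  intros Hu Hv. apply fn2_ext; intros x y.
  apply (Derive_mult (fun t => u x t) (fun t => v x t)); [apply (Hu x y) | apply (Hv x y)].
Qed.

Lemma pdn_plus a b u v : smooth2 u -> smooth2 v ->
  pdn a b (plus2 u v) = plus2 (pdn a b u) (pdn a b v).
Proof.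
  intros Hu Hv. unfold pdn. induction a as [|a IH]; simpl.
  - induction b as [|b IHb]; simpl; auto.
    rewrite IHb. apply pd2_plus; [apply (regular2_pdn u 0 b Hu) | apply (regular2_pdn v 0 b Hv)].
  - rewrite IH. apply pd1_plus; [apply (regular2_pdn u a b Hu) | apply (regular2_pdn v a b Hv)].
Qed.

Lemma pdn_scal a b c u : pdn a b (scal2 c u) = scal2 c (pdn a b u).
Proof.
  assert (E1 : forall w, pd1 (scal2 c w) = scal2 c (pd1 w)).
  { intro w. apply fn2_ext; intros x y. apply (Derive_scal (fun t => w t y)). }
  assert (E2 : forall w, pd2 (scal2 c w) = scal2 c (pd2 w)).
  { intro w. apply fn2_ext; intros x y. apply (Derive_scal (fun t => w x t)). }
  unfold pdn. induction a as [|a IH]; simpl.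
  - induction b as [|b IHb]; simpl; auto. rewrite IHb. apply E2.
  - rewrite IH. apply E1.
Qed.

Lemma smooth2_zero : smooth2 (fun _ _ => 0).
Proof.
  assert (E : forall a b, pdn a b (fun _ _ => 0) = (fun _ _ => 0)).
  { intros a b. unfold pdn. induction a as [|a IH]; simpl.
    - induction b as [|b IHb]; simpl; auto.
      rewrite IHb. apply fn2_ext; intros. exact (Derive_const 0 _).
    - rewrite IH. apply fn2_ext; intros. exact (Derive_const 0 _). }
  intros a b x y. rewrite E. apply regular2_zero.
Qed.

Lemma smooth2_plus u v : smooth2 u -> smooth2 v -> smooth2 (plus2 u v).
Proof.
  intros Hu Hv a b x y. rewrite pdn_plus by auto.
  apply regular2_plus; apply regular2_pdn; auto.
Qed.

Lemma smooth2_scal c u : smooth2 u -> smooth2 (scal2 c u).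
Proof. intros Hu a b x y. rewrite pdn_scal. apply regular2_scal, regular2_pdn, Hu. Qed.

(** * The Leibniz rule *)

(* A term [((p, q), (r, s))] of the Leibniz expansion of [pdn a b (mul2 u v)] stands for
   [pdn p q u * pdn r s v].  The expansion is kept unsimplified: every first-order
   derivative doubles the list, so no binomial coefficients appear. *)
Definition leibniz_term (u v : fn2) (t : (nat * nat) * (nat * nat)) : fn2 :=
  match t with ((p, q), (r, s)) => mul2 (pdn p q u) (pdn r s v) end.

Fixpoint leibniz_sum (u v : fn2) (l : list ((nat * nat) * (nat * nat))) : fn2 :=
  match l with
  | [] => fun _ _ => 0
  | t :: l' => plus2 (leibniz_term u v t) (leibniz_sum u v l')
  end.

Definition leibniz_step1 (t : (nat * nat) * (nat * nat)) :=
  match t with ((p, q), (r, s)) => [((p, q), (S r, s)); ((S p, q), (r, s))] end.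
Definition leibniz_step2 (t : (nat * nat) * (nat * nat)) :=
  match t with ((p, q), (r, s)) => [((p, q), (r, S s)); ((p, S q), (r, s))] end.

Definition leibniz_terms (a b : nat) : list ((nat * nat) * (nat * nat)) :=
  Nat.iter a (flat_map leibniz_step1) (Nat.iter b (flat_map leibniz_step2) [((0, 0), (0, 0))]%nat).

Lemma leibniz_sum_app u v l1 l2 :
  leibniz_sum u v (l1 ++ l2) = plus2 (leibniz_sum u v l1) (leibniz_sum u v l2).
Proof.
  induction l1 as [|t l1 IH]; simpl; apply fn2_ext; intros x y; unfold plus2.
  - ring.
  - rewrite IH. unfold plus2. ring.
Qed.

Lemma regular2_leibniz_sum u v l : smooth2 u -> smooth2 v -> regular2 (leibniz_sum u v l).
Proof.
  intros Hu Hv. induction l as [|[[p q] [r s]] l IH]; simpl.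
  - apply regular2_zero.
  - apply regular2_plus; auto. apply regular2_mul; apply regular2_pdn; auto.
Qed.

Lemma pd1_leibniz_sum u v l : smooth2 u -> smooth2 v ->
  pd1 (leibniz_sum u v l) = leibniz_sum u v (flat_map leibniz_step1 l).
Proof.
  intros Hu Hv. induction l as [|[[p q] [r s]] l IH].
  - apply fn2_ext; intros x y. exact (Derive_const 0 _).
  - cbn [leibniz_sum flat_map]. rewrite leibniz_sum_app, <- IH.
    cbn [leibniz_term]. rewrite pd1_plus, pd1_mul.
    2-3: apply regular2_pdn; auto.
    2: apply regular2_mul; apply regular2_pdn; auto.
    2: apply regular2_leibniz_sum; auto.
    change (pd1 (pdn p q u)) with (pdn (S p) q u). change (pd1 (pdn r s v)) with (pdn (S r) s v).
    apply fn2_ext; intros x y. cbv [plus2 mul2 leibniz_sum leibniz_term leibniz_step1]. ring.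
Qed.

Lemma pd2_leibniz_sum u v l : smooth2 u -> smooth2 v ->
  pd2 (leibniz_sum u v l) = leibniz_sum u v (flat_map leibniz_step2 l).
Proof.
  intros Hu Hv. induction l as [|[[p q] [r s]] l IH].
  - apply fn2_ext; intros x y. exact (Derive_const 0 _).
  - cbn [leibniz_sum flat_map]. rewrite leibniz_sum_app, <- IH.
    cbn [leibniz_term]. rewrite pd2_plus, pd2_mul.
    2-3: apply regular2_pdn; auto.
    2: apply regular2_mul; apply regular2_pdn; auto.
    2: apply regular2_leibniz_sum; auto.
    rewrite !pd2_pdn by auto.
    apply fn2_ext; intros x y. cbv [plus2 mul2 leibniz_sum leibniz_term leibniz_step2]. ring.
Qed.

Lemma pdn_mul a b u v : smooth2 u -> smooth2 v ->
  pdn a b (mul2 u v) = leibniz_sum u v (leibniz_terms a b).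
Proof.
  intros Hu Hv. unfold pdn, leibniz_terms. induction a as [|a IH]; simpl.
  - induction b as [|b IHb]; simpl.
    + apply fn2_ext; intros x y. cbv [plus2 mul2 leibniz_sum leibniz_term pdn]. simpl. ring.
    + rewrite IHb. apply pd2_leibniz_sum; auto.
  - rewrite IH. apply pd1_leibniz_sum; auto.
Qed.

Lemma smooth2_mul u v : smooth2 u -> smooth2 v -> smooth2 (mul2 u v).
Proof.
  intros Hu Hv a b x y. rewrite pdn_mul by auto. apply regular2_leibniz_sum; auto.
Qed.

Lemma smooth2_leibniz_term u v t : smooth2 u -> smooth2 v -> smooth2 (leibniz_term u v t).
Proof. intros Hu Hv. destruct t as [[p q] [r s]]. apply smooth2_mul; apply smooth2_pdn; auto. Qed.

Lemma smooth2_leibniz_sum u v l : smooth2 u -> smooth2 v -> smooth2 (leibniz_sum u v l).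
Proof.
  intros Hu Hv. induction l as [|t l IH]; simpl.
  - apply smooth2_zero.
  - apply smooth2_plus, IH. apply smooth2_leibniz_term; auto.
Qed.

Definition lower_term (a b : nat) (t : (nat * nat) * (nat * nat)) : Prop :=
  match t with ((p, q), (r, s)) => (p + r = a)%nat /\ (q + s = b)%nat /\ (1 <= p + q)%nat end.

Lemma leibniz_terms_shape a b : exists l,
  leibniz_terms a b = ((0, 0), (a, b))%nat :: l /\
  List.Forall (lower_term a b) l /\ (length l + 1 = 2 ^ (a + b))%nat.
Proof.
  unfold leibniz_terms. induction a as [|a IH]; simpl.
  - induction b as [|b IHb]; simpl.
    + exists []. auto.
    + destruct IHb as [l [Hb [Hl Hlen]]]. rewrite Hb.
      exists (((0, 1), (0, b))%nat :: flat_map leibniz_step2 l). split; [reflexivity | split].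
      * constructor; [simpl; lia|]. apply List.Forall_flat_map. revert Hl. apply List.Forall_impl.
        intros [[p q] [r s]] H. simpl in *. constructor; [|constructor; [|constructor]]; simpl; lia.
      * cbn [length].
        rewrite (flat_map_constant_length (c := 2%nat)) by (intros [[? ?] [? ?]] _; reflexivity).
        lia.
  - destruct IH as [l [Ha [Hl Hlen]]]. rewrite Ha.
    exists (((1, 0), (a, b))%nat :: flat_map leibniz_step1 l). split; [reflexivity | split].
    + constructor; [simpl; lia|]. apply List.Forall_flat_map. revert Hl. apply List.Forall_impl.
      intros [[p q] [r s]] H. simpl in *. constructor; [|constructor; [|constructor]]; simpl; lia.
    + cbn [length].
      rewrite (flat_map_constant_length (c := 2%nat)) by (intros [[? ?] [? ?]] _; reflexivity).
      lia.
Qed.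

Lemma pdn_mul_split a b u v : smooth2 u -> smooth2 v -> exists l,
  pdn a b (mul2 u v) = plus2 (mul2 u (pdn a b v)) (leibniz_sum u v l) /\
  List.Forall (lower_term a b) l /\ (length l <= 2 ^ (a + b))%nat.
Proof.
  intros Hu Hv. destruct (leibniz_terms_shape a b) as [l [Hterms [Hl Hlen]]].
  exists l. rewrite pdn_mul, Hterms by auto. split; [reflexivity | split; auto; lia].
Qed.

(** * Integration over the torus *)

Lemma smooth2_ex_RInt_y u x a b : smooth2 u -> ex_RInt (fun y => u x y) a b.
Proof. intros Hu. apply ex_RInt_y. intros; apply (smooth2_continuous u 0 0), Hu. Qed.

Lemma smooth2_ex_RInt_x u y a b : smooth2 u -> ex_RInt (fun x => u x y) a b.
Proof.
  intros Hu. apply (@ex_RInt_continuous R_CompleteNormedModule).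
  intros z _. apply continuous2_x, (smooth2_continuous u 0 0), Hu.
Qed.

Lemma is_derive_inner_integral u a b x : smooth2 u ->
  is_derive (fun x => RInt (fun y => u x y) a b) x (RInt (fun y => pd1 u x y) a b).
Proof.
  intros Hu. apply is_derive_RInt_y.
  - intros; apply (smooth2_ex_derive_x u 0 0), Hu.
  - intros; apply (smooth2_continuous u 0 0), Hu.
  - intros; apply (smooth2_continuous u 1 0), Hu.
Qed.

Lemma ex_RInt_inner_integral u a b c d : smooth2 u ->
  ex_RInt (fun x => RInt (fun y => u x y) a b) c d.
Proof.
  intros Hu. apply (@ex_RInt_continuous R_CompleteNormedModule). intros z _.
  apply (@ex_derive_continuous R_AbsRing R_NormedModule).
  eexists. apply is_derive_inner_integral, Hu.
Qed.

Lemma intT2_ext u v : (forall x y, u x y = v x y) -> intT2 u = intT2 v.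
Proof. intros H. rewrite (fn2_ext u v H). reflexivity. Qed.

Lemma intT2_zero : intT2 (fun _ _ => 0) = 0.
Proof.
  unfold intT2. rewrite (RInt_ext _ (fun _ => 0)).
  - rewrite RInt_const. apply (@scal_zero_r R_AbsRing R_NormedModule).
  - intros x _. rewrite RInt_const. apply (@scal_zero_r R_AbsRing R_NormedModule).
Qed.

Lemma intT2_plus u v : smooth2 u -> smooth2 v -> intT2 (plus2 u v) = intT2 u + intT2 v.
Proof.
  intros Hu Hv. unfold intT2, plus2.
  rewrite (RInt_ext _ (fun x => RInt (fun y => u x y) (-PI) PI + RInt (fun y => v x y) (-PI) PI)).
  - apply (RInt_plus (V := R_CompleteNormedModule)); apply ex_RInt_inner_integral; auto.
  - intros x _. apply (RInt_plus (V := R_CompleteNormedModule));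
      apply smooth2_ex_RInt_y; auto.
Qed.

Lemma intT2_scal c u : smooth2 u -> intT2 (scal2 c u) = c * intT2 u.
Proof.
  intros Hu. unfold intT2, scal2.
  rewrite (RInt_ext _ (fun x => c * RInt (fun y => u x y) (-PI) PI)).
  - apply (RInt_scal (V := R_CompleteNormedModule)), ex_RInt_inner_integral, Hu.
  - intros x _. apply (RInt_scal (V := R_CompleteNormedModule)).
    apply smooth2_ex_RInt_y, Hu.
Qed.

Lemma intT2_le u v : smooth2 u -> smooth2 v ->
  (forall x y, -PI <= x <= PI -> -PI <= y <= PI -> u x y <= v x y) -> intT2 u <= intT2 v.
Proof.
  intros Hu Hv H. pose proof PI_RGT_0. unfold intT2.
  apply RInt_le; [lra | apply ex_RInt_inner_integral; auto .. |].
  intros x Hx. apply RInt_le; [lra | apply smooth2_ex_RInt_y; auto .. |].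
  intros y Hy. apply H; lra.
Qed.

Lemma smooth2_sq u : smooth2 u -> smooth2 (fun x y => u x y ^ 2).
Proof.
  intros Hu. rewrite (fn2_ext _ (mul2 u u)) by (intros; unfold mul2; ring).
  apply smooth2_mul; auto.
Qed.

Create HintDb smooth2.
#[export] Hint Resolve smooth2_pd1 smooth2_pd2 smooth2_pdn smooth2_zero smooth2_plus smooth2_scal
  smooth2_mul smooth2_sq smooth2_leibniz_term smooth2_leibniz_sum : smooth2.

Lemma L2sq_ge0 u : smooth2 u -> 0 <= L2sq u.
Proof.
  intros Hu. rewrite <- intT2_zero. apply intT2_le.
  - apply smooth2_zero.
  - apply smooth2_sq, Hu.
  - intros; apply pow2_ge_0.
Qed.

Lemma intT2_pd1_periodic F : smooth2 F -> periodic2 F -> intT2 (pd1 F) = 0.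
Proof.
  intros Hs Hp. unfold intT2.
  set (Phi := fun x => RInt (fun y => F x y) (-PI) PI).
  assert (HPhi : forall x, is_derive Phi x (RInt (fun y => pd1 F x y) (-PI) PI))
    by (intro; apply is_derive_inner_integral, Hs).
  rewrite (RInt_ext _ (Derive Phi)) by (intros x _; symmetry; apply is_derive_unique, HPhi).
  rewrite RInt_Derive.
  - unfold Phi. rewrite (RInt_ext (fun y => F PI y) (fun y => F (-PI) y)); [ring|].
    intros y _. rewrite <- (proj1 (Hp (-PI) y)). f_equal. ring.
  - intros x _. eexists. apply HPhi.
  - intros x _. apply (continuous_ext (fun x => RInt (fun y => pd1 F x y) (-PI) PI)).
    + intro z. symmetry. apply is_derive_unique, HPhi.
    + apply (@ex_derive_continuous R_AbsRing R_NormedModule).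
      eexists. apply is_derive_inner_integral, smooth2_pd1, Hs.
Qed.

Lemma intT2_pd2_periodic F : smooth2 F -> periodic2 F -> intT2 (pd2 F) = 0.
Proof.
  intros Hs Hp. unfold intT2. rewrite (RInt_ext _ (fun _ => 0)).
  - rewrite RInt_const. apply (@scal_zero_r R_AbsRing R_NormedModule).
  - intros x _. unfold pd2. rewrite (RInt_Derive (fun t => F x t)).
    + rewrite <- (proj2 (Hp x (-PI))). replace (-PI + 2 * PI) with PI by ring.
      apply (@minus_eq_zero R_AbelianGroup).
    + intros t _. apply (smooth2_ex_derive_y F 0 0), Hs.
    + intros t _. apply (continuous2_y (pd2 F)), (smooth2_continuous _ 0 0), smooth2_pd2, Hs.
Qed.

Lemma le_0_of_le_mul_pos X c : (forall e, 0 < e -> X <= c * e) -> X <= 0.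
Proof.
  intros H. destruct (Rle_dec X 0) as [|HX]; auto. exfalso.
  destruct (Rle_dec c 0) as [Hc|Hc].
  - specialize (H 1 Rlt_0_1). lra.
  - assert (He : 0 < X / (2 * c)) by (apply Rdiv_lt_0_compat; lra).
    specialize (H _ He). replace (c * (X / (2 * c))) with (X / 2) in H by (field; lra). lra.
Qed.

Lemma le_mul_sqrt_of_weighted_bound X A B M : 0 <= A -> 0 <= B ->
  (forall l, 0 < l -> X <= M / 2 * (l * A + B / l)) -> X <= M * sqrt A * sqrt B.
Proof.
  intros HA HB H.
  destruct (Req_dec A 0) as [->|NA]; [|destruct (Req_dec B 0) as [->|NB]].
  - rewrite sqrt_0, Rmult_0_r, Rmult_0_l. apply (le_0_of_le_mul_pos X (M * B / 2)).
    intros e He. specialize (H (/ e) (Rinv_0_lt_compat e He)).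
    replace (M * B / 2 * e) with (M / 2 * (/ e * 0 + B / / e)) by (field; lra). exact H.
  - rewrite sqrt_0, Rmult_0_r. apply (le_0_of_le_mul_pos X (M * A / 2)).
    intros e He. specialize (H e He).
    replace (M * A / 2 * e) with (M / 2 * (e * A + 0 / e)) by (field; lra). exact H.
  - assert (sA : 0 < sqrt A) by (apply sqrt_lt_R0; lra).
    assert (sB : 0 < sqrt B) by (apply sqrt_lt_R0; lra).
    specialize (H (sqrt B / sqrt A) (Rdiv_lt_0_compat _ _ sB sA)).
    apply (Rle_trans _ _ _ H), Req_le.
    pose proof (pow2_sqrt A HA) as EA. pose proof (pow2_sqrt B HB) as EB.
    set (sa := sqrt A) in *. set (sb := sqrt B) in *.
    rewrite <- EA, <- EB. field. lra.
Qed.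

Lemma Rabs_mul_le_weighted v w l : 0 < l -> Rabs v * Rabs w <= / 2 * (l * v ^ 2 + w ^ 2 / l).
Proof.
  intros Hl. rewrite <- (pow2_abs v), <- (pow2_abs w).
  assert (E : / 2 * (l * Rabs v ^ 2 + Rabs w ^ 2 / l) - Rabs v * Rabs w
              = / 2 / l * (l * Rabs v - Rabs w) ^ 2) by (field; lra).
  assert (0 <= / 2 / l * (l * Rabs v - Rabs w) ^ 2).
  { apply Rmult_le_pos; [|apply pow2_ge_0]. apply Rlt_le, Rdiv_lt_0_compat; lra. }
  lra.
Qed.

Lemma Rabs_intT2_mul3_le u v w M : smooth2 u -> smooth2 v -> smooth2 w ->
  (forall x y, -PI <= x <= PI -> -PI <= y <= PI -> Rabs (u x y) <= M) ->
  Rabs (intT2 (fun x y => u x y * v x y * w x y)) <= M * sqrt (L2sq v) * sqrt (L2sq w).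
Proof.
  intros Hu Hv Hw HM.
  assert (Huvw : smooth2 (fun x y => u x y * v x y * w x y))
    by exact (smooth2_mul (mul2 u v) w (smooth2_mul u v Hu Hv) Hw).
  apply le_mul_sqrt_of_weighted_bound; try apply L2sq_ge0; auto.
  intros l Hl.
  set (Q := plus2 (scal2 (M / 2 * l) (fun x y => v x y ^ 2))
                  (scal2 (M / 2 / l) (fun x y => w x y ^ 2))).
  assert (IQ : intT2 Q = M / 2 * (l * L2sq v + L2sq w / l)).
  { unfold Q. rewrite intT2_plus, !intT2_scal by auto with smooth2.
    unfold L2sq. field. lra. }
  assert (Hpt : forall x y, -PI <= x <= PI -> -PI <= y <= PI ->
                  Rabs (u x y * v x y * w x y) <= Q x y).
  { intros x y Hx Hy. specialize (HM x y Hx Hy).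
    pose proof (Rabs_mul_le_weighted (v x y) (w x y) l Hl).
    assert (0 <= M) by (pose proof (Rabs_pos (u x y)); lra).
    rewrite !Rabs_mult. unfold Q, plus2, scal2.
    apply Rle_trans with (M * (Rabs (v x y) * Rabs (w x y))).
    - rewrite Rmult_assoc. apply Rmult_le_compat_r; auto.
      apply Rmult_le_pos; apply Rabs_pos.
    - apply Rle_trans with (M * (/ 2 * (l * v x y ^ 2 + w x y ^ 2 / l))).
      + apply Rmult_le_compat_l; auto.
      + right. field. lra. }
  rewrite <- IQ. apply Rabs_le. split.
  - replace (- intT2 Q) with (intT2 (scal2 (-1) Q))
      by (rewrite intT2_scal by (unfold Q; auto with smooth2); ring).
    apply intT2_le; [unfold Q; auto with smooth2 | auto with smooth2 |].
    intros x y Hx Hy. specialize (Hpt x y Hx Hy). unfold scal2.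
    pose proof (Rle_abs (- (u x y * v x y * w x y))) as H. rewrite Rabs_Ropp in H. lra.
  - apply intT2_le; [auto with smooth2 | unfold Q; auto with smooth2 |].
    intros x y Hx Hy. specialize (Hpt x y Hx Hy).
    pose proof (Rle_abs (u x y * v x y * w x y)). lra.
Qed.

(** * Sobolev embedding of H^2 into L^infinity *)

Lemma ex_RInt_cont (f : R -> R) a b : (forall t, continuous f t) -> ex_RInt f a b.
Proof. intros H. apply (@ex_RInt_continuous R_CompleteNormedModule). intros; apply H. Qed.

Lemma RInt_sub_interval_le (B : R -> R) a b c d : a <= c -> c <= d -> d <= b ->
  (forall t, continuous B t) -> (forall t, 0 <= B t) -> RInt B c d <= RInt B a b.
Proof.
  intros Hac Hcd Hdb HB HB0.
  rewrite <- (RInt_Chasles (V := R_CompleteNormedModule) B a c b),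
          <- (RInt_Chasles (V := R_CompleteNormedModule) B c d b) by (apply ex_RInt_cont; auto).
  assert (0 <= RInt B a c) by (apply RInt_ge_0; auto; apply ex_RInt_cont; auto).
  assert (0 <= RInt B d b) by (apply RInt_ge_0; auto; apply ex_RInt_cont; auto).
  unfold plus; simpl. lra.
Qed.

Lemma Rabs_sub_le_RInt_bound (k k' B : R -> R) a b c d : a <= c -> c <= d -> d <= b ->
  (forall t, is_derive k t (k' t)) -> (forall t, continuous k' t) ->
  (forall t, continuous B t) -> (forall t, Rabs (k' t) <= B t) ->
  Rabs (k d - k c) <= RInt B a b.
Proof.
  intros Hac Hcd Hdb Hk Hk' HB HkB.
  assert (HB0 : forall t, 0 <= B t)
    by (intro t; pose proof (Rabs_pos (k' t)); pose proof (HkB t); lra).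
  replace (k d - k c) with (RInt k' c d)
    by (apply is_RInt_unique, (is_RInt_derive (V := R_CompleteNormedModule)); auto).
  apply Rle_trans with (RInt (fun t => Rabs (k' t)) c d).
  - apply abs_RInt_le; auto. apply ex_RInt_cont; auto.
  - apply Rle_trans with (RInt B c d); [| apply RInt_sub_interval_le; auto].
    apply RInt_le; auto; apply ex_RInt_cont; auto.
    intro t. apply continuous_comp; auto. apply continuous_Rabs.
Qed.

(* Averaging [k x0 <= k x + RInt B a b] over [x] in [a, b]. *)
Lemma le_RInt_of_deriv_bound (k k' B : R -> R) a b x0 : 1 <= b - a -> a <= x0 <= b ->
  (forall t, is_derive k t (k' t)) -> (forall t, continuous k' t) ->
  (forall t, continuous B t) -> (forall t, Rabs (k' t) <= B t) -> (forall t, 0 <= k t) ->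
  k x0 <= RInt (fun t => k t + B t) a b.
Proof.
  intros Hab Hx0 Hk Hk' HB HkB Hk0.
  assert (Hkc : forall t, continuous k t)
    by (intro t; apply (@ex_derive_continuous R_AbsRing R_NormedModule); eexists; apply Hk).
  set (IB := RInt B a b).
  assert (Hpt : forall x, a <= x <= b -> k x0 <= k x + IB).
  { intros x Hx. destruct (Rle_dec x x0).
    - pose proof (Rabs_sub_le_RInt_bound k k' B a b x x0 ltac:(lra) ltac:(lra) ltac:(lra)
                    Hk Hk' HB HkB).
      pose proof (Rle_abs (k x0 - k x)).
      unfold IB. lra.
    - pose proof (Rabs_sub_le_RInt_bound k k' B a b x0 x ltac:(lra) ltac:(lra) ltac:(lra)
                    Hk Hk' HB HkB).
      rewrite Rabs_minus_sym in *.
      pose proof (Rle_abs (k x0 - k x)). unfold IB. lra. }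
  assert (Havg : RInt (fun _ => k x0) a b <= RInt (fun x => k x + IB) a b).
  { apply RInt_le; [lra | apply ex_RInt_cont; intro; apply continuous_const | |].
    - apply ex_RInt_cont. intro. apply (continuous_plus k (fun _ => IB)); auto.
      apply continuous_const.
    - intros x Hx. apply Hpt. lra. }
  rewrite (RInt_plus (V := R_CompleteNormedModule)) in Havg |- * by (apply ex_RInt_cont; auto;
    intro; apply continuous_const).
  rewrite !RInt_const in Havg. unfold scal, plus, mult in *; simpl in *.
  unfold mult in Havg; simpl in Havg.
  assert (0 <= RInt k a b) by (apply RInt_ge_0; auto; [lra | apply ex_RInt_cont; auto]).
  fold IB. nra.
Qed.

Lemma continuous_sq (f : R -> R) x : continuous f x -> continuous (fun t => f t ^ 2) x.
Proof.
  intros Hf. apply (continuous_ext (fun t => f t * f t)); [intro; simpl; ring|].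
  apply (continuous_mult f f); auto.
Qed.

Lemma sq_le_RInt_sq_deriv (w : R -> R) a b x0 : 1 <= b - a -> a <= x0 <= b ->
  (forall t, ex_derive w t) -> (forall t, continuous (Derive w) t) ->
  w x0 ^ 2 <= RInt (fun t => 2 * w t ^ 2 + Derive w t ^ 2) a b.
Proof.
  intros Hab Hx0 Hw Hw'.
  assert (Hwc : forall t, continuous w t)
    by (intro; apply (@ex_derive_continuous R_AbsRing R_NormedModule), Hw).
  rewrite (RInt_ext _ (fun t => w t ^ 2 + (w t ^ 2 + Derive w t ^ 2))) by (intros; simpl; ring).
  apply (le_RInt_of_deriv_bound (fun t => w t ^ 2) (fun t => 2 * w t * Derive w t)); auto.
  - intro t. replace (2 * w t * Derive w t) with (INR 2 * Derive w t * w t ^ Nat.pred 2)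
      by (simpl; ring).
    apply is_derive_pow, Derive_correct, Hw.
  - intro t. apply (continuous_mult (fun t => 2 * w t) (Derive w)); auto.
    apply (continuous_mult (fun _ => 2) w); auto. apply continuous_const.
  - intro t. apply (continuous_plus (fun t => w t ^ 2) (fun t => Derive w t ^ 2));
      apply continuous_sq; auto.
  - intro t. apply Rabs_le. pose proof (pow2_ge_0 (w t + Derive w t)).
    pose proof (pow2_ge_0 (w t - Derive w t)). split; nra.
  - intro t. apply pow2_ge_0.
Qed.

Lemma PI_sub_opp_ge1 : 1 <= PI - - PI.
Proof. pose proof PI2_3_2. lra. Qed.

Lemma sq_le_RInt_slice_x h x0 y : smooth2 h -> -PI <= x0 <= PI ->
  h x0 y ^ 2 <= RInt (fun x => 2 * h x y ^ 2 + pd1 h x y ^ 2) (-PI) PI.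
Proof.
  intros Hh Hx0. apply (sq_le_RInt_sq_deriv (fun t => h t y)); auto using PI_sub_opp_ge1.
  - intro t. apply (smooth2_ex_derive_x h 0 0), Hh.
  - intro t. apply (continuous2_x (pd1 h)), (smooth2_continuous (pd1 h) 0 0); auto with smooth2.
Qed.

Lemma sq_le_RInt_slice_y h x y0 : smooth2 h -> -PI <= y0 <= PI ->
  h x y0 ^ 2 <= RInt (fun y => 2 * h x y ^ 2 + pd2 h x y ^ 2) (-PI) PI.
Proof.
  intros Hh Hy0. apply (sq_le_RInt_sq_deriv (fun t => h x t)); auto using PI_sub_opp_ge1.
  - intro t. apply (smooth2_ex_derive_y h 0 0), Hh.
  - intro t. apply (continuous2_y (pd2 h)), (smooth2_continuous (pd2 h) 0 0); auto with smooth2.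
Qed.

Lemma RInt_slice_x_le_intT2 h y0 : smooth2 h -> -PI <= y0 <= PI ->
  RInt (fun x => 2 * h x y0 ^ 2 + pd1 h x y0 ^ 2) (-PI) PI <=
  4 * L2sq h + 2 * L2sq (pd2 h) + 2 * L2sq (pd1 h) + L2sq (pdn 1 1 h).
Proof.
  intros Hh Hy0. pose proof PI_RGT_0.
  set (S w := plus2 (scal2 2 (fun x y => w x y ^ 2)) (fun x y => pd2 w x y ^ 2)).
  assert (HS : forall w, smooth2 w -> smooth2 (S w)) by (intros; unfold S; auto with smooth2).
  assert (IS : forall w, smooth2 w -> intT2 (S w) = 2 * L2sq w + L2sq (pd2 w))
    by (intros; unfold S; rewrite intT2_plus, intT2_scal by auto with smooth2; reflexivity).
  replace (4 * L2sq h + 2 * L2sq (pd2 h) + 2 * L2sq (pd1 h) + L2sq (pdn 1 1 h))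
    with (intT2 (plus2 (scal2 2 (S h)) (S (pd1 h)))).
  2:{ rewrite intT2_plus, intT2_scal, !IS by auto with smooth2.
      rewrite (fn2_ext (pd2 (pd1 h)) (pdn 1 1 h)) by (intros; apply pd2_pd1, Hh). ring. }
  unfold intT2. apply RInt_le; [lra | | apply ex_RInt_inner_integral; auto with smooth2 |].
  - apply (smooth2_ex_RInt_x (plus2 (scal2 2 (fun x y => h x y ^ 2)) (fun x y => pd1 h x y ^ 2))).
    auto with smooth2.
  - intros x _.
    assert (h x y0 ^ 2 <= RInt (fun y => S h x y) (-PI) PI)
      by exact (sq_le_RInt_slice_y h x y0 Hh Hy0).
    assert (pd1 h x y0 ^ 2 <= RInt (fun y => S (pd1 h) x y) (-PI) PI)
      by exact (sq_le_RInt_slice_y (pd1 h) x y0 (smooth2_pd1 h Hh) Hy0).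
    rewrite (RInt_ext _ (fun y => 2 * S h x y + S (pd1 h) x y)) by reflexivity.
    rewrite (RInt_plus (V := R_CompleteNormedModule)
               (fun y => 2 * S h x y) (fun y => S (pd1 h) x y)),
      (RInt_scal (V := R_CompleteNormedModule) (fun y => S h x y)).
    2: apply smooth2_ex_RInt_y, HS, Hh.
    2: apply (smooth2_ex_RInt_y (scal2 2 (S h))), smooth2_scal, HS, Hh.
    2: apply smooth2_ex_RInt_y, HS, smooth2_pd1, Hh.
    unfold plus, scal; simpl; unfold mult; simpl. lra.
Qed.

Lemma sq_le_Hsq2 h x0 y0 : smooth2 h -> -PI <= x0 <= PI -> -PI <= y0 <= PI ->
  h x0 y0 ^ 2 <= 4 * Hsq 2 h.
Proof.
  intros Hh Hx0 Hy0.
  pose proof (sq_le_RInt_slice_x h x0 y0 Hh Hx0). pose proof (RInt_slice_x_le_intT2 h y0 Hh Hy0).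
  assert (Hnn : forall a b, 0 <= L2sq (pdn a b h)) by (intros; apply L2sq_ge0; auto with smooth2).
  pose proof (Hnn 0 0)%nat. pose proof (Hnn 0 1)%nat. pose proof (Hnn 0 2)%nat.
  pose proof (Hnn 1 0)%nat. pose proof (Hnn 1 1)%nat. pose proof (Hnn 2 0)%nat.
  change (Hsq 2 h) with (L2sq (pdn 0 0 h) + L2sq (pdn 0 1 h) + L2sq (pdn 0 2 h)
                         + (L2sq (pdn 1 0 h) + L2sq (pdn 1 1 h)) + L2sq (pdn 2 0 h)).
  simpl in *. lra.
Qed.

Lemma Rabs_le_Hsq2 h x y : smooth2 h -> -PI <= x <= PI -> -PI <= y <= PI ->
  Rabs (h x y) <= 2 * sqrt (Hsq 2 h).
Proof.
  intros Hh Hx Hy.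
  rewrite <- (sqrt_pow2 (Rabs (h x y))) by apply Rabs_pos.
  rewrite <- (sqrt_pow2 2) by lra. rewrite <- sqrt_mult_alt by lra.
  apply sqrt_le_1_alt. rewrite pow2_abs.
  replace (2 ^ 2) with 4 by ring. apply sq_le_Hsq2; auto.
Qed.

Lemma sum_f_R0_ge_term (f : nat -> R) n i :
  (forall j, 0 <= f j) -> (i <= n)%nat -> f i <= sum_f_R0 f n.
Proof.
  intros Hf Hi. induction n as [|n IH].
  - replace i with 0%nat by lia. simpl. lra.
  - simpl. destruct (Nat.eq_dec i (S n)) as [->|NE].
    + pose proof (cond_pos_sum f n Hf). lra.
    + pose proof (IH ltac:(lia)). pose proof (Hf (S n)). lra.
Qed.

Lemma Hsq_ge0 k u : smooth2 u -> 0 <= Hsq k u.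
Proof.
  intros Hu. apply cond_pos_sum. intro a. apply cond_pos_sum. intro b.
  apply L2sq_ge0; auto with smooth2.
Qed.

Lemma L2sq_pdn_le_Hsq u p q k : smooth2 u -> (p + q <= k)%nat -> L2sq (pdn p q u) <= Hsq k u.
Proof.
  intros Hu Hk. unfold Hsq.
  apply Rle_trans with (sum_f_R0 (fun b => L2sq (pdn p b u)) (k - p)).
  - apply (sum_f_R0_ge_term (fun b => L2sq (pdn p b u))); [|lia].
    intro; apply L2sq_ge0; auto with smooth2.
  - apply (sum_f_R0_ge_term (fun a => sum_f_R0 (fun b => L2sq (pdn a b u)) (k - a))); [|lia].
    intro a. apply cond_pos_sum. intro b. apply L2sq_ge0; auto with smooth2.
Qed.

Lemma L2sq_pdn_le_Hdotsq u a k : smooth2 u -> (a <= k)%nat ->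
  L2sq (pdn a (k - a) u) <= Hdotsq k u.
Proof.
  intros Hu Ha. apply (sum_f_R0_ge_term (fun a => L2sq (pdn a (k - a) u))); auto.
  intro; apply L2sq_ge0; auto with smooth2.
Qed.

Lemma Hnorm2_ge_l k u v : smooth2 v -> sqrt (Hsq k u) <= Hnorm2 k u v.
Proof. intros Hv. apply sqrt_le_1_alt. pose proof (Hsq_ge0 k v Hv). lra. Qed.

Lemma Hnorm2_ge_r k u v : smooth2 u -> sqrt (Hsq k v) <= Hnorm2 k u v.
Proof. intros Hu. apply sqrt_le_1_alt. pose proof (Hsq_ge0 k u Hu). lra. Qed.

Lemma Rabs_pdn_le_Hsq w p q k x y : smooth2 w -> (p + q + 2 <= k)%nat ->
  -PI <= x <= PI -> -PI <= y <= PI -> Rabs (pdn p q w x y) <= 6 * sqrt (Hsq k w).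
Proof.
  intros Hw Hk Hx Hy.
  assert (Hs : Hsq 2 (pdn p q w) <= 3 ^ 2 * Hsq k w).
  { assert (Hle : forall c d, (c + d <= 2)%nat -> L2sq (pdn c d (pdn p q w)) <= Hsq k w).
    { intros c d Hcd. rewrite pdn_pdn by exact Hw. apply L2sq_pdn_le_Hsq; auto; lia. }
    pose proof (Hsq_ge0 k w Hw).
    change (Hsq 2 (pdn p q w)) with
      (L2sq (pdn 0 0 (pdn p q w)) + L2sq (pdn 0 1 (pdn p q w)) + L2sq (pdn 0 2 (pdn p q w))
       + (L2sq (pdn 1 0 (pdn p q w)) + L2sq (pdn 1 1 (pdn p q w))) + L2sq (pdn 2 0 (pdn p q w))).
    pose proof (Hle 0 0 ltac:(lia))%nat. pose proof (Hle 0 1 ltac:(lia))%nat.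
    pose proof (Hle 0 2 ltac:(lia))%nat. pose proof (Hle 1 0 ltac:(lia))%nat.
    pose proof (Hle 1 1 ltac:(lia))%nat. pose proof (Hle 2 0 ltac:(lia))%nat.
    lra. }
  assert (sqrt (Hsq 2 (pdn p q w)) <= 3 * sqrt (Hsq k w)).
  { rewrite <- (sqrt_pow2 3) by lra. rewrite <- sqrt_mult_alt by lra.
    apply sqrt_le_1_alt, Hs. }
  pose proof (Rabs_le_Hsq2 (pdn p q w) x y (smooth2_pdn p q w Hw) Hx Hy). lra.
Qed.

(** * The commutator estimate *)

Lemma smooth2_adv f1 f2 g : smooth2 f1 -> smooth2 f2 -> smooth2 g -> smooth2 (adv f1 f2 g).
Proof.
  intros. change (adv f1 f2 g) with (plus2 (mul2 f1 (pd1 g)) (mul2 f2 (pd2 g))).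
  auto with smooth2.
Qed.

Lemma smooth2_divf f1 f2 : smooth2 f1 -> smooth2 f2 -> smooth2 (divf f1 f2).
Proof. intros. change (divf f1 f2) with (plus2 (pd1 f1) (pd2 f2)). auto with smooth2. Qed.

#[export] Hint Resolve smooth2_adv smooth2_divf : smooth2.

(* [(f . grad G) G = 1/2 (pd1 (f1 G^2) + pd2 (f2 G^2)) - 1/2 (div f) G^2], and the two
   derivatives integrate to zero by periodicity. *)
Lemma intT2_adv_mul_self f1 f2 G : smooth2 f1 -> smooth2 f2 -> smooth2 G ->
  periodic2 f1 -> periodic2 f2 -> periodic2 G ->
  intT2 (mul2 (adv f1 f2 G) G) = - (1 / 2) * intT2 (mul2 (mul2 (divf f1 f2) G) G).
Proof.
  intros S1 S2 SG P1 P2 PG.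
  set (F1 := mul2 f1 (mul2 G G)). set (F2 := mul2 f2 (mul2 G G)).
  set (D := mul2 (mul2 (divf f1 f2) G) G).
  assert (E1 : pd1 F1 = fun x y => pd1 f1 x y * (G x y * G x y)
                                   + f1 x y * (pd1 G x y * G x y + G x y * pd1 G x y)).
  { unfold F1. rewrite pd1_mul, (pd1_mul G G); try reflexivity;
      apply regular2_smooth2; auto with smooth2. }
  assert (E2 : pd2 F2 = fun x y => pd2 f2 x y * (G x y * G x y)
                                   + f2 x y * (pd2 G x y * G x y + G x y * pd2 G x y)).
  { unfold F2. rewrite pd2_mul, (pd2_mul G G); try reflexivity;
      apply regular2_smooth2; auto with smooth2. }
  rewrite (intT2_ext _ (plus2 (scal2 (1 / 2) (pd1 F1))
                              (plus2 (scal2 (1 / 2) (pd2 F2)) (scal2 (- (1 / 2)) D)))).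
  - unfold F1, F2, D. rewrite !intT2_plus, !intT2_scal by auto 6 with smooth2.
    rewrite intT2_pd1_periodic, intT2_pd2_periodic by auto using periodic2_mul with smooth2.
    ring.
  - intros x y. unfold plus2, scal2. rewrite E1, E2. unfold D, mul2, divf, adv. field.
Qed.

Lemma Rabs_intT2_adv_mul_self_le f1 f2 G : smooth2 f1 -> smooth2 f2 -> smooth2 G ->
  periodic2 f1 -> periodic2 f2 -> periodic2 G ->
  Rabs (intT2 (mul2 (adv f1 f2 G) G)) <= Hnorm1 2 (divf f1 f2) * L2sq G.
Proof.
  intros S1 S2 SG P1 P2 PG. rewrite intT2_adv_mul_self by auto.
  assert (Hdiv : forall x y, -PI <= x <= PI -> -PI <= y <= PI ->
                   Rabs (divf f1 f2 x y) <= 2 * Hnorm1 2 (divf f1 f2))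
    by (intros; apply Rabs_le_Hsq2; auto with smooth2).
  pose proof (Rabs_intT2_mul3_le _ G G _ (smooth2_divf f1 f2 S1 S2) SG SG Hdiv) as H.
  rewrite Rmult_assoc, sqrt_sqrt in H by (apply L2sq_ge0; auto).
  rewrite Rabs_mult, Rabs_Ropp, (Rabs_pos_eq (1 / 2)) by lra.
  change (intT2 (mul2 (mul2 (divf f1 f2) G) G))
    with (intT2 (fun x y => divf f1 f2 x y * G x y * G x y)). lra.
Qed.

Lemma sqrt_L2sq_pdn_le_Hsq u p q k : smooth2 u -> (p + q <= k)%nat ->
  sqrt (L2sq (pdn p q u)) <= sqrt (Hsq k u).
Proof. intros. apply sqrt_le_1_alt, L2sq_pdn_le_Hsq; auto. Qed.

Lemma sqrt_L2sq_pdn_le_Hnorm2_grad f p q k : smooth2 f -> (1 <= p + q)%nat ->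
  (p + q <= k + 1)%nat -> sqrt (L2sq (pdn p q f)) <= Hnorm2 k (pd1 f) (pd2 f).
Proof.
  intros Hf Hpq Hk.
  destruct (pdn_factor p q f Hf Hpq) as [[p' [-> Hp']] | [q' [-> Hq']]].
  - eapply Rle_trans; [apply (sqrt_L2sq_pdn_le_Hsq _ _ _ k); auto with smooth2; lia|].
    apply Hnorm2_ge_l; auto with smooth2.
  - eapply Rle_trans; [apply (sqrt_L2sq_pdn_le_Hsq _ _ _ k); auto with smooth2; lia|].
    apply Hnorm2_ge_r; auto with smooth2.
Qed.

Lemma Rabs_pdn_le_Hnorm2_grad f p q k x y : smooth2 f -> (1 <= p + q)%nat ->
  (p + q + 1 <= k)%nat -> -PI <= x <= PI -> -PI <= y <= PI ->
  Rabs (pdn p q f x y) <= 6 * Hnorm2 k (pd1 f) (pd2 f).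
Proof.
  intros Hf Hpq Hk Hx Hy.
  destruct (pdn_factor p q f Hf Hpq) as [[p' [-> Hp']] | [q' [-> Hq']]].
  - eapply Rle_trans; [apply (Rabs_pdn_le_Hsq _ _ _ k); auto with smooth2; lia|].
    apply Rmult_le_compat_l; [lra | apply Hnorm2_ge_l; auto with smooth2].
  - eapply Rle_trans; [apply (Rabs_pdn_le_Hsq _ _ _ k); auto with smooth2; lia|].
    apply Rmult_le_compat_l; [lra | apply Hnorm2_ge_r; auto with smooth2].
Qed.

Lemma Rmult_le_compat3 c x X y Y : 0 <= c -> 0 <= x <= X -> 0 <= y <= Y -> c * x * y <= c * X * Y.
Proof. intros. apply Rmult_le_compat; try apply Rmult_le_compat_l; try apply Rmult_le_pos; lra. Qed.

Lemma Hnorm2_ge0 k u v : 0 <= Hnorm2 k u v.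
Proof. apply sqrt_pos. Qed.

(* Whichever factor carries at most [m] derivatives is estimated in L^infinity,
   the other one in L^2. *)
Lemma Rabs_intT2_lower_term_le f h G p q r s s0 m NH1 NH2 NG :
  smooth2 f -> smooth2 h -> smooth2 G ->
  (1 <= p + q)%nat -> (p + q + r + s = s0)%nat -> (s0 <= 2 * m + 1)%nat ->
  sqrt (Hsq (s0 - 1) h) <= NH1 -> sqrt (Hsq (m + 2) h) <= NH2 -> sqrt (L2sq G) <= NG ->
  Rabs (intT2 (mul2 (leibniz_term f h ((p, q), (r, s))%nat) G)) <=
  6 * (Hnorm2 (m + 1) (pd1 f) (pd2 f) * NH1 + Hnorm2 (s0 - 1) (pd1 f) (pd2 f) * NH2) * NG.
Proof.
  intros Hf Hh HG Hpq Hs Hm HN1 HN2 HNG.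
  pose proof (sqrt_pos (Hsq (s0 - 1) h)). pose proof (sqrt_pos (Hsq (m + 2) h)).
  pose proof (sqrt_pos (L2sq G)).
  pose proof (Hnorm2_ge0 (m + 1) (pd1 f) (pd2 f)). pose proof (Hnorm2_ge0 (s0 - 1) (pd1 f) (pd2 f)).
  change (intT2 (mul2 (leibniz_term f h ((p, q), (r, s))%nat) G))
    with (intT2 (fun x y => pdn p q f x y * pdn r s h x y * G x y)).
  destruct (Nat.le_gt_cases (p + q) m).
  - eapply Rle_trans; [apply Rabs_intT2_mul3_le; auto with smooth2|].
    + intros. apply (Rabs_pdn_le_Hnorm2_grad f p q (m + 1)); auto; lia.
    + assert (sqrt (L2sq (pdn r s h)) <= NH1).
      { eapply Rle_trans; [apply (sqrt_L2sq_pdn_le_Hsq _ _ _ (s0 - 1)); auto; lia | auto]. }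
      pose proof (sqrt_pos (L2sq (pdn r s h))).
      assert (0 <= Hnorm2 (s0 - 1) (pd1 f) (pd2 f) * NH2 * NG)
        by (apply Rmult_le_pos; [apply Rmult_le_pos|]; lra).
      apply Rle_trans with (6 * Hnorm2 (m + 1) (pd1 f) (pd2 f) * NH1 * NG);
        [apply Rmult_le_compat3; lra | lra].
  - rewrite (intT2_ext _ (fun x y => pdn r s h x y * pdn p q f x y * G x y)) by (intros; ring).
    eapply Rle_trans; [apply (Rabs_intT2_mul3_le _ _ _ (6 * NH2)); auto with smooth2|].
    + intros. eapply Rle_trans; [apply (Rabs_pdn_le_Hsq h r s (m + 2)); auto; lia | lra].
    + assert (sqrt (L2sq (pdn p q f)) <= Hnorm2 (s0 - 1) (pd1 f) (pd2 f))
        by (apply sqrt_L2sq_pdn_le_Hnorm2_grad; auto; lia).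
      pose proof (sqrt_pos (L2sq (pdn p q f))).
      assert (0 <= Hnorm2 (m + 1) (pd1 f) (pd2 f) * NH1 * NG)
        by (apply Rmult_le_pos; [apply Rmult_le_pos|]; lra).
      apply Rle_trans with (6 * NH2 * Hnorm2 (s0 - 1) (pd1 f) (pd2 f) * NG);
        [apply Rmult_le_compat3; lra | lra].
Qed.

Lemma Rabs_intT2_leibniz_sum_le f h G l X : smooth2 f -> smooth2 h -> smooth2 G ->
  (forall t, In t l -> Rabs (intT2 (mul2 (leibniz_term f h t) G)) <= X) ->
  Rabs (intT2 (mul2 (leibniz_sum f h l) G)) <= INR (length l) * X.
Proof.
  intros Hf Hh HG. induction l as [|t l IH]; intros Ht.
  - simpl. rewrite (intT2_ext _ (fun _ _ => 0)) by (intros; unfold mul2; simpl; ring).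
    rewrite intT2_zero, Rabs_R0. lra.
  - rewrite (intT2_ext _ (plus2 (mul2 (leibniz_term f h t) G) (mul2 (leibniz_sum f h l) G)))
      by (intros; cbv [mul2 plus2 leibniz_sum]; ring).
    rewrite intT2_plus by auto with smooth2.
    pose proof (Ht t (or_introl eq_refl)).
    pose proof (IH (fun t' Ht' => Ht t' (or_intror Ht'))).
    pose proof (Rabs_triang (intT2 (mul2 (leibniz_term f h t) G))
                            (intT2 (mul2 (leibniz_sum f h l) G))).
    cbn [length]. rewrite S_INR. lra.
Qed.

Lemma Rabs_intT2_lower_sum_le f h G l a b m NH1 NH2 NG :
  smooth2 f -> smooth2 h -> smooth2 G -> (a + b <= 2 * m + 1)%nat ->
  List.Forall (lower_term a b) l -> (length l <= 2 ^ (a + b))%nat ->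
  sqrt (Hsq (a + b - 1) h) <= NH1 -> sqrt (Hsq (m + 2) h) <= NH2 -> sqrt (L2sq G) <= NG ->
  Rabs (intT2 (mul2 (leibniz_sum f h l) G)) <=
  2 ^ (a + b) * (6 * (Hnorm2 (m + 1) (pd1 f) (pd2 f) * NH1
                      + Hnorm2 (a + b - 1) (pd1 f) (pd2 f) * NH2) * NG).
Proof.
  intros Hf Hh HG Hm Hl Hlen HN1 HN2 HNG.
  set (X := 6 * (Hnorm2 (m + 1) (pd1 f) (pd2 f) * NH1
                 + Hnorm2 (a + b - 1) (pd1 f) (pd2 f) * NH2) * NG).
  assert (HX : 0 <= X).
  { pose proof (sqrt_pos (Hsq (a + b - 1) h)). pose proof (sqrt_pos (Hsq (m + 2) h)).
    pose proof (sqrt_pos (L2sq G)).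
    pose proof (Hnorm2_ge0 (m + 1) (pd1 f) (pd2 f)).
    pose proof (Hnorm2_ge0 (a + b - 1) (pd1 f) (pd2 f)).
    apply Rmult_le_pos; [|lra]. apply Rmult_le_pos; [lra|].
    apply Rplus_le_le_0_compat; apply Rmult_le_pos; lra. }
  apply Rle_trans with (INR (length l) * X).
  - apply Rabs_intT2_leibniz_sum_le; auto.
    intros [[p q] [r s]] Ht. rewrite List.Forall_forall in Hl.
    destruct (Hl _ Ht) as [Hpr [Hqs Hpq]].
    apply (Rabs_intT2_lower_term_le f h G p q r s (a + b) m); auto; lia.
  - apply Rmult_le_compat_r; auto.
    replace 2 with (INR 2) by (simpl; ring). rewrite <- pow_INR. apply le_INR, Hlen.
Qed.

Lemma pdn_adv_split a b f1 f2 g : smooth2 f1 -> smooth2 f2 -> smooth2 g -> exists l1 l2,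
  pdn a b (adv f1 f2 g) =
    plus2 (adv f1 f2 (pdn a b g)) (plus2 (leibniz_sum f1 (pd1 g) l1) (leibniz_sum f2 (pd2 g) l2)) /\
  List.Forall (lower_term a b) l1 /\ (length l1 <= 2 ^ (a + b))%nat /\
  List.Forall (lower_term a b) l2 /\ (length l2 <= 2 ^ (a + b))%nat.
Proof.
  intros Sf1 Sf2 Sg.
  destruct (pdn_mul_split a b f1 (pd1 g)) as [l1 [E1 [Hl1 Hlen1]]]; auto with smooth2.
  destruct (pdn_mul_split a b f2 (pd2 g)) as [l2 [E2 [Hl2 Hlen2]]]; auto with smooth2.
  exists l1, l2. split; [|auto].
  change (adv f1 f2 g) with (plus2 (mul2 f1 (pd1 g)) (mul2 f2 (pd2 g))).
  rewrite pdn_plus, E1, E2, pdn_pd1, pdn_pd2, <- pd2_pdn by auto with smooth2.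
  apply fn2_ext. intros x y. cbv [plus2 mul2 adv].
  change (pdn (S a) b g x y) with (pd1 (pdn a b g) x y). ring.
Qed.

Lemma Rabs_intT2_pdn_adv_le a b m f1 f2 g N11 N12 N21 N22 NG :
  (a + b <= 2 * m + 1)%nat ->
  smooth2 f1 -> smooth2 f2 -> smooth2 g -> periodic2 f1 -> periodic2 f2 -> periodic2 g ->
  sqrt (Hsq (a + b - 1) (pd1 g)) <= N11 -> sqrt (Hsq (m + 2) (pd1 g)) <= N12 ->
  sqrt (Hsq (a + b - 1) (pd2 g)) <= N21 -> sqrt (Hsq (m + 2) (pd2 g)) <= N22 ->
  sqrt (L2sq (pdn a b g)) <= NG ->
  Rabs (intT2 (mul2 (pdn a b (adv f1 f2 g)) (pdn a b g))) <=
  6 * 2 ^ (a + b) *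
    ((Hnorm2 (m + 1) (pd1 f1) (pd2 f1) * N11 + Hnorm2 (m + 1) (pd1 f2) (pd2 f2) * N21) * NG
     + (Hnorm2 (a + b - 1) (pd1 f1) (pd2 f1) * N12
        + Hnorm2 (a + b - 1) (pd1 f2) (pd2 f2) * N22) * NG)
  + Hnorm1 2 (divf f1 f2) * L2sq (pdn a b g).
Proof.
  intros Hm Sf1 Sf2 Sg Pf1 Pf2 Pg H11 H12 H21 H22 HG.
  destruct (pdn_adv_split a b f1 f2 g Sf1 Sf2 Sg) as [l1 [l2 [E [Hl1 [Hlen1 [Hl2 Hlen2]]]]]].
  set (G := pdn a b g) in *.
  assert (SG : smooth2 G) by (unfold G; auto with smooth2).
  assert (PG : periodic2 G) by (apply periodic2_pdn, Pg).
  pose proof (Rabs_intT2_adv_mul_self_le f1 f2 G Sf1 Sf2 SG Pf1 Pf2 PG).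
  pose proof (Rabs_intT2_lower_sum_le f1 (pd1 g) G l1 a b m N11 N12 NG
                Sf1 (smooth2_pd1 g Sg) SG Hm Hl1 Hlen1 H11 H12 HG).
  pose proof (Rabs_intT2_lower_sum_le f2 (pd2 g) G l2 a b m N21 N22 NG
                Sf2 (smooth2_pd2 g Sg) SG Hm Hl2 Hlen2 H21 H22 HG).
  replace (intT2 (mul2 (pdn a b (adv f1 f2 g)) G))
    with (intT2 (mul2 (adv f1 f2 G) G) + (intT2 (mul2 (leibniz_sum f1 (pd1 g) l1) G)
                                          + intT2 (mul2 (leibniz_sum f2 (pd2 g) l2) G))).
  2:{ rewrite E, <- !intT2_plus by auto with smooth2.
      apply intT2_ext. intros x y. cbv [plus2 mul2]. ring. }
  set (T0 := intT2 (mul2 (adv f1 f2 G) G)) in *.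
  set (T1 := intT2 (mul2 (leibniz_sum f1 (pd1 g) l1) G)) in *.
  set (T2 := intT2 (mul2 (leibniz_sum f2 (pd2 g) l2) G)) in *.
  pose proof (Rabs_triang T0 (T1 + T2)). pose proof (Rabs_triang T1 T2).
  lra.
Qed.

Lemma trilin_split a b f1 f2 g1 g2 :
  smooth2 f1 -> smooth2 f2 -> smooth2 g1 -> smooth2 g2 ->
  trilin a b f1 f2 g1 g2 = intT2 (mul2 (pdn a b (adv f1 f2 g1)) (pdn a b g1))
                           + intT2 (mul2 (pdn a b (adv f1 f2 g2)) (pdn a b g2)).
Proof. intros. rewrite <- intT2_plus by auto with smooth2. reflexivity. Qed.

Lemma L2sq_pdn_le_Hdotnorm2 a b g1 g2 : smooth2 g1 -> smooth2 g2 ->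
  L2sq (pdn a b g1) + L2sq (pdn a b g2) <= Hdotnorm2 (a + b) g1 g2 ^ 2.
Proof.
  intros Hg1 Hg2. unfold Hdotnorm2.
  rewrite pow2_sqrt by (apply Rplus_le_le_0_compat; apply cond_pos_sum; intro;
                        apply L2sq_ge0; auto with smooth2).
  replace b with (a + b - a)%nat at 1 2 by lia.
  pose proof (L2sq_pdn_le_Hdotsq g1 a (a + b) Hg1 ltac:(lia)).
  pose proof (L2sq_pdn_le_Hdotsq g2 a (a + b) Hg2 ltac:(lia)). lra.
Qed.

Lemma sqrt_L2sq_pdn_le_Hdotnorm2 a b g1 g2 : smooth2 g1 -> smooth2 g2 ->
  sqrt (L2sq (pdn a b g1)) <= Hdotnorm2 (a + b) g1 g2 /\
  sqrt (L2sq (pdn a b g2)) <= Hdotnorm2 (a + b) g1 g2.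
Proof.
  intros Hg1 Hg2. pose proof (L2sq_pdn_le_Hdotnorm2 a b g1 g2 Hg1 Hg2).
  pose proof (L2sq_ge0 _ (smooth2_pdn a b g1 Hg1)).
  pose proof (L2sq_ge0 _ (smooth2_pdn a b g2 Hg2)).
  rewrite <- (sqrt_pow2 (Hdotnorm2 (a + b) g1 g2)) by apply sqrt_pos.
  split; apply sqrt_le_1_alt; lra.
Qed.

Lemma Rabs_add_le_of_bounds T1 T2 K P D L1 L2 Y :
  0 <= K -> 0 <= P -> 0 <= D -> 0 <= Y -> L1 + L2 <= Y ->
  Rabs T1 <= 6 * K * P + D * L1 -> Rabs T2 <= 6 * K * P + D * L2 ->
  Rabs (T1 + T2) <= (12 * K + 1) * (P + D * Y).
Proof.
  intros HK HP HD HY HL H1 H2. pose proof (Rabs_triang T1 T2).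
  assert (D * (L1 + L2) <= D * Y) by (apply Rmult_le_compat_l; auto).
  assert (0 <= K * P) by (apply Rmult_le_pos; auto).
  assert (0 <= K * (D * Y)) by (apply Rmult_le_pos; auto; apply Rmult_le_pos; auto).
  assert (0 <= D * Y) by (apply Rmult_le_pos; auto).
  nra.
Qed.

Theorem lemma2p2 :
  forall s0 : nat, (1 <= s0)%nat ->
  exists C : R,
  forall (a b : nat), (a + b = s0)%nat ->
  forall f1 f2 g1 g2 : fn2,
    smooth_T2 f1 -> smooth_T2 f2 -> smooth_T2 g1 -> smooth_T2 g2 ->
    let m := (s0 / 2)%nat in
    let gd := Hdotnorm2 s0 g1 g2 in
    Rabs (trilin a b f1 f2 g1 g2) <=
    C * ( (Hnorm2 (m + 1) (pd1 f1) (pd2 f1) * Hnorm2 (s0 - 1) (pd1 g1) (pd1 g2)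
           + Hnorm2 (m + 1) (pd1 f2) (pd2 f2) * Hnorm2 (s0 - 1) (pd2 g1) (pd2 g2)) * gd
        + (Hnorm2 (s0 - 1) (pd1 f1) (pd2 f1) * Hnorm2 (m + 2) (pd1 g1) (pd1 g2)
           + Hnorm2 (s0 - 1) (pd1 f2) (pd2 f2) * Hnorm2 (m + 2) (pd2 g1) (pd2 g2)) * gd
        + Hnorm1 2 (divf f1 f2) * gd ^ 2 ).
Proof.
  intros s0 _. exists (12 * 2 ^ s0 + 1).
  intros a b <- f1 f2 g1 g2 [Sf1 Pf1] [Sf2 Pf2] [Sg1 Pg1] [Sg2 Pg2] m gd.
  assert (Hm : (a + b <= 2 * m + 1)%nat)
    by (pose proof (Nat.div_mod (a + b) 2); pose proof (Nat.mod_upper_bound (a + b) 2); lia).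
  destruct (sqrt_L2sq_pdn_le_Hdotnorm2 a b g1 g2 Sg1 Sg2) as [HG1 HG2].
  pose proof (Rabs_intT2_pdn_adv_le a b m f1 f2 g1 _ _ _ _ gd Hm Sf1 Sf2 Sg1 Pf1 Pf2 Pg1
    (Hnorm2_ge_l _ _ _ (smooth2_pd1 g2 Sg2)) (Hnorm2_ge_l _ _ _ (smooth2_pd1 g2 Sg2))
    (Hnorm2_ge_l _ _ _ (smooth2_pd2 g2 Sg2)) (Hnorm2_ge_l _ _ _ (smooth2_pd2 g2 Sg2)) HG1).
  pose proof (Rabs_intT2_pdn_adv_le a b m f1 f2 g2 _ _ _ _ gd Hm Sf1 Sf2 Sg2 Pf1 Pf2 Pg2
    (Hnorm2_ge_r _ _ _ (smooth2_pd1 g1 Sg1)) (Hnorm2_ge_r _ _ _ (smooth2_pd1 g1 Sg1))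
    (Hnorm2_ge_r _ _ _ (smooth2_pd2 g1 Sg1)) (Hnorm2_ge_r _ _ _ (smooth2_pd2 g1 Sg1)) HG2).
  rewrite trilin_split by assumption.
  apply (Rabs_add_le_of_bounds _ _ _ _ _ (L2sq (pdn a b g1)) (L2sq (pdn a b g2))); auto.
  - apply pow_le; lra.
  - repeat (apply Rplus_le_le_0_compat || apply Rmult_le_pos); apply sqrt_pos.
  - apply sqrt_pos.
  - apply pow2_ge_0.
  - apply L2sq_pdn_le_Hdotnorm2; assumption.
Qed.
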